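(* For any finite word $e=s_1s_2\cdots s_m$ in the letters $f,g$ there is a formula \[e(z,x)=xz^m+\sum_{j=0}^m a_jz^j\] valid for all $z,x$, where each $a_j\in\{-1,0,1\}$, $a_m=0$ if $e$ ends with $f$, and $a_m=-1$ if $e$ ends with $g$. Furthermore, $a_0,a_1,\dots,a_{m-1}$ (in order) are the labels of the vertices visited, after the initial vertex, by the walk in the directed graph $\mathcal{G}$ that starts at the vertex $*$ and follows the edges labeled $s_1,s_2,\dots,s_m$ in turn. Thus the sequences $(a_0,\dots,a_{m-1})$ that occur are precisely the sequences in $\{-1,0,1\}$ whose nonzero entries alternate between $1$ and $-1$, starting with $1$. Similarly, for any right-infinite word $e$ in $f,g$, \[\pi(e,z)=\sum_{j=0}^\infty a_jz^j,\] where each $a_j\in\{-1,0,1\}$ and $a_0,a_1,\dots$ are the labels of the vertices visited (after the initial one) by the right-infinite walk in $\mathcal{G}$ from $*$ determined by $e$.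
   Context: For $z\in\mathbb{D}^*=\{0<|z|<1\}$, $f(x)=zx$ and $g(x)=z(x-1)+1$. For a finite word $e=s_1\cdots s_m$, $e(z,x)=s_1(s_2(\cdots s_m(x)))$. For a right-infinite word $e$, $\pi(e,z)=\lim_{n\to\infty}e_n(z,x)$ where $e_n$ is the prefix of length $n$ (the limit is independent of $x$). The graph $\mathcal{G}$ has five vertices: $*$ (unlabeled start), a vertex labeled $1$, a vertex labeled $-1$, and two vertices $0_f$, $0_g$ each labeled $0$. Its edges are: $*\xrightarrow{f}0_f$, $*\xrightarrow{g}1$; $0_f\xrightarrow{f}0_f$, $0_f\xrightarrow{g}1$; $1\xrightarrow{f}-1$, $1\xrightarrow{g}0_g$; $0_g\xrightarrow{g}0_g$, $0_g\xrightarrow{f}-1$; $-1\xrightarrow{f}0_f$, $-1\xrightarrow{g}1$. *)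

From HB Require Import structures.
From mathcomp Require Import all_boot all_order all_algebra.
From mathcomp Require Import all_classical all_reals all_analysis.
From mathcomp Require Import complex.
Set Implicit Arguments. Unset Strict Implicit. Unset Printing Implicit Defensive.
Import Order.TTheory GRing.Theory Num.Theory.
Import numFieldTopology.Exports numFieldNormedType.Exports.
Local Open Scope ring_scope.

Inductive letter := Lf | Lg.

Definition apply_letter {C : pzRingType} (z : C) (s : letter) (x : C) : C :=
  match s with
  | Lf => z * x
  | Lg => z * (x - 1) + 1
  end.

Definition eval_word {C : pzRingType} (z x : C) (e : seq letter) : C :=
  foldr (apply_letter z) x e.

Definition word_prefix (e : nat -> letter) (n : nat) : seq letter := mkseq e n.

Inductive vtx := Star | V1 | Vm1 | V0f | V0g.

(* Labels (the start vertex * is unlabeled; it is never visited after the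
   initial step, so the value given to it here is irrelevant). *)
Definition label (v : vtx) : int :=
  match v with
  | Star => 0
  | V1 => 1
  | Vm1 => -1
  | V0f => 0
  | V0g => 0
  end.

Definition step (v : vtx) (s : letter) : vtx :=
  match v, s with
  | Star, Lf => V0f
  | Star, Lg => V1
  | V0f, Lf => V0f
  | V0f, Lg => V1
  | V1, Lf => Vm1
  | V1, Lg => V0g
  | V0g, Lg => V0g
  | V0g, Lf => Vm1
  | Vm1, Lf => V0f
  | Vm1, Lg => V1
  end.

Definition walk_labels (e : seq letter) : seq int :=
  map label (scanl step Star e).

Fixpoint walk_vtx (e : nat -> letter) (n : nat) : vtx :=
  match n with
  | 0 => Star
  | n'.+1 => step (walk_vtx e n') (e n')
  end.

Definition alternating_signs (a : seq int) : bool :=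
  all (fun t => t \in [:: -1; 0; 1]) a &&
  (let b := [seq t <- a | t != 0] in b == mkseq (fun i => (-1) ^+ i) (size b)).

Local Open Scope complex_scope.
HB.instance Definition _ (R : rcfType) := PseudoPointedMetric.copy R[i] (R[i])^o.
HB.instance Definition _ (R : rcfType) := NormedModule.copy R[i] (R[i])^o.

(* Appending a letter s to a word e of length m replaces x by s(x) in e(z,x):
   f turns x z^m into x z^(m+1), while g turns it into x z^(m+1) - z^(m+1) + z^m.
   Hence the coefficients of z^0, ..., z^(m-1) never change afterwards, the new
   coefficient of z^m is the old final one (0 after f, -1 after g) plus 1 if
   s = g, and the new final one is 0 or -1 according to s.  The vertices of G
   record exactly the last letter together with the label produced, and each
   vertex determines the sign of the next nonzero label, which gives the
   alternation.  For |z| < 1 the series of labels is dominated by a geometric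
   series, and the remainder (x + a_m) z^m of the prefixes tends to 0. *)

From mathcomp Require Import all_boot all_order all_algebra.
From mathcomp Require Import all_classical all_reals all_analysis.
From mathcomp Require Import complex.
From mathcomp Require Import ring.
Import Order.TTheory GRing.Theory Num.Theory.
Import numFieldTopology.Exports numFieldNormedType.Exports.
Local Open Scope ring_scope.
Local Open Scope complex_scope.
Local Open Scope classical_set_scope.

Definition last_coef (e : seq letter) : int := if last Lf e is Lg then -1 else 0.

Definition word_coefs (e : seq letter) : seq int :=
  rcons (walk_labels e) (last_coef e).

Lemma size_walk_labels e : size (walk_labels e) = size e.
Proof. by rewrite /walk_labels size_map size_scanl. Qed.

Lemma walk_labels_rcons e s :
  walk_labels (rcons e s) =
  rcons (walk_labels e) (label (step (foldl step Star e) s)).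
Proof. by rewrite /walk_labels scanl_rcons map_rcons foldl_rcons. Qed.

Lemma label_step_walk e s :
  label (step (foldl step Star e) s) = last_coef e + (if s is Lg then 1 else 0).
Proof.
elim/last_ind: e => [|e s' _]; first by case: s.
rewrite foldl_rcons /last_coef last_rcons.
by case: (foldl step Star e); case: s'; case: s.
Qed.

Lemma nth_word_coefs_rcons e s j : (j < size e)%N ->
  nth 0 (word_coefs (rcons e s)) j = nth 0 (word_coefs e) j.
Proof.
move=> je; rewrite /word_coefs walk_labels_rcons !nth_rcons !size_rcons.
by rewrite size_walk_labels je (ltn_trans je (ltnSn _)).
Qed.

Lemma nth_word_coefs_last e s :
  nth 0 (word_coefs (rcons e s)) (size e) = last_coef e + (if s is Lg then 1 else 0).
Proof.
by rewrite /word_coefs walk_labels_rcons !nth_rcons !size_rcons size_walk_labels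
  ltnSn ltnn eqxx label_step_walk.
Qed.

Lemma last_coef_rcons e s : last_coef (rcons e s) = if s is Lg then -1 else 0.
Proof. by rewrite /last_coef last_rcons. Qed.

Lemma nth_word_coefs_size e : nth 0 (word_coefs e) (size e) = last_coef e.
Proof. by rewrite /word_coefs nth_rcons size_walk_labels ltnn eqxx. Qed.

Lemma eval_wordE (C : comPzRingType) (z x : C) e :
  eval_word z x e = x * z ^+ size e
    + \sum_(j < (size e).+1) (nth 0 (word_coefs e) j)%:~R * z ^+ j.
Proof.
elim/last_ind: e x => [|e s IH] x.
  by rewrite /eval_word /= big_ord1 expr0 mulr1 mul0r addr0.
rewrite /eval_word foldr_rcons -/(eval_word _ _ e) IH size_rcons.
rewrite big_ord_recr [in RHS]big_ord_recr [in RHS]big_ord_recr /=.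
under [in RHS]eq_bigr => j _ do rewrite nth_word_coefs_rcons //.
rewrite nth_word_coefs_last -(size_rcons e s) !nth_word_coefs_size.
rewrite last_coef_rcons size_rcons.
by case: s; rewrite /= ?intrD exprS; ring.
Qed.

Definition trit (t : int) : bool := t \in [:: -1; 0; 1].

Fixpoint alternates_from (sgn : int) (a : seq int) : bool :=
  if a is t :: a' then
    if t == 0 then alternates_from sgn a' else (t == sgn) && alternates_from (- sgn) a'
  else true.

Lemma mkseqS_cons (T : Type) (f : nat -> T) n :
  mkseq f n.+1 = f 0%N :: mkseq (fun i => f i.+1) n.
Proof. by rewrite /mkseq /= -[1%N]addn0 iotaDl -map_comp. Qed.

Lemma alternates_fromE sgn a : (sgn = 1 \/ sgn = -1) ->
  alternates_from sgn a =
  let b := [seq t <- a | t != 0] in b == mkseq (fun i => sgn * (-1) ^+ i) (size b).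
Proof.
elim: a sgn => [|t a IH] sgn sgn_unit //=.
have [->|t_neq0] := eqVneq t 0; first exact: IH.
rewrite /= mkseqS_cons eqseq_cons expr0 mulr1 (IH (- sgn)); last first.
  by case: sgn_unit => ->; [right|left].
by congr (_ && (_ == _)); apply: eq_mkseq => i; rewrite exprS mulrA mulrN1.
Qed.

Lemma alternating_signsE a :
  alternating_signs a = all trit a && alternates_from 1 a.
Proof.
rewrite /alternating_signs (@alternates_fromE 1) //; last by left.
by congr (_ && (_ == _)); apply: eq_mkseq => i; rewrite mul1r.
Qed.

Definition walk_labels_from (v : vtx) (e : seq letter) : seq int :=
  map label (scanl step v e).

Definition next_sign (v : vtx) : int :=
  match v with Star | V0f | Vm1 => 1 | V1 | V0g => -1 end.

Lemma trit_label v : trit (label v).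
Proof. by case: v. Qed.

Lemma all_trit_walk_labels_from v e : all trit (walk_labels_from v e).
Proof.
by rewrite /walk_labels_from; elim: (scanl step v e) => //= w l ->; rewrite trit_label.
Qed.

Lemma walk_labels_from_alternates v e :
  alternates_from (next_sign v) (walk_labels_from v e).
Proof. by elim: e v => [|s e IH] [] //=; case: s; apply: IH. Qed.

Lemma step_to_label v t : trit t -> (t != 0 -> t = next_sign v) ->
  exists s, label (step v s) = t /\
    next_sign (step v s) = if t == 0 then next_sign v else - next_sign v.
Proof.
rewrite /trit !inE => /or3P [] /eqP -> sgn_t; case: v sgn_t => sgn_t;
  first [by exists Lf | by exists Lg | by move/(_ isT)/eqP: sgn_t].
Qed.

Lemma walk_labels_from_onto v a : all trit a -> alternates_from (next_sign v) a ->
  exists e, walk_labels_from v e = a.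
Proof.
elim: a v => [|t a IH] v; first by exists [::].
move=> /= /andP [trit_t trit_a] alt_ta.
have [|s [label_s sign_s]] := @step_to_label v t trit_t.
  by move=> t_neq0; move: alt_ta; rewrite (negPf t_neq0) => /andP [/eqP].
have alt_a : alternates_from (next_sign (step v s)) a.
  by move: alt_ta; rewrite sign_s; case: eqP => // _ /andP [].
have [e walk_e] := IH _ trit_a alt_a.
by exists (s :: e); rewrite /walk_labels_from /= -/(walk_labels_from _ e) walk_e label_s.
Qed.

Lemma walk_labelsP a :
  (exists e : seq letter, walk_labels e = a) <-> alternating_signs a.
Proof.
rewrite alternating_signsE; split => [[e <-]|/andP [trit_a alt_a]].
  by rewrite (all_trit_walk_labels_from Star e) (walk_labels_from_alternates Star e).
by have [e walk_e] := @walk_labels_from_onto Star a trit_a alt_a; exists e.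
Qed.

Lemma walk_vtx_word_prefix e n : foldl step Star (word_prefix e n) = walk_vtx e n.
Proof.
by elim: n => // n IH; rewrite /word_prefix mkseqS foldl_rcons -/(word_prefix e n) IH.
Qed.

Lemma walk_labels_word_prefix e n :
  walk_labels (word_prefix e n) = mkseq (fun j => label (walk_vtx e j.+1)) n.
Proof.
elim: n => // n IH.
rewrite /word_prefix mkseqS walk_labels_rcons -/(word_prefix e n) IH.
by rewrite walk_vtx_word_prefix mkseqS.
Qed.

Lemma eval_word_prefix (C : comPzRingType) (z x : C) e n :
  eval_word z x (word_prefix e n) =
  series (fun j => (label (walk_vtx e j.+1))%:~R * z ^+ j) n
    + (x + (last_coef (word_prefix e n))%:~R) * z ^+ n.
Proof.
have size_prefix : size (word_prefix e n) = n by rewrite size_mkseq.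
rewrite eval_wordE big_ord_recr /= nth_word_coefs_size size_prefix seriesEord.
under eq_bigr => j _ do
  rewrite /word_coefs nth_rcons walk_labels_word_prefix size_mkseq ltn_ord nth_mkseq //.
by rewrite mulrDl addrCA addrA.
Qed.

Section ComplexConvergence.
Variable R : realType.

Lemma normc_real (w : R[i]) : `|w| = (complex.Re `|w|)%:C.
Proof. by rewrite normc_def. Qed.

Lemma Re_normc_ge0 (w : R[i]) : 0 <= complex.Re `|w|.
Proof. by rewrite -ler0c -normc_real. Qed.

Lemma normc_real_complex (k : R) : `|k%:C| = `|k|%:C :> R[i].
Proof. by rewrite normc_def /= expr0n /= addr0 sqrtr_sqr. Qed.

Lemma normc_i : `|'i%C| = 1 :> R[i].
Proof. by rewrite normc_def /= expr0n /= add0r expr1n sqrtr1. Qed.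

Lemma normc_ge_Im (w : R[i]) : `|complex.Im w|%:C <= `|w|.
Proof.
have -> : complex.Im w = - complex.Re (w * 'i%C) by rewrite ReiNIm opprK.
by rewrite normrN (le_trans (normc_ge_Re _)) // normrM normc_i mulr1.
Qed.

Lemma normc_complex_le (a b : R) : `|a%:C + 'i%C * b%:C| <= (`|a| + `|b|)%:C.
Proof.
rewrite rmorphD (le_trans (ler_normD _ _)) //.
by rewrite normrM normc_i mul1r !normc_real_complex.
Qed.

(* Norms on R[i] take values in R[i] itself; bounds are stated through real
   majorants embedded by [%:C]. *)
Lemma cvgc_real_bound {T} {F : set_system T} {FF : Filter F}
    (u : T -> R[i]) (l : R[i]) (r : T -> R) :
  (forall t, `|l - u t| <= (r t)%:C) -> r @ F --> 0 -> u @ F --> l.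
Proof.
move=> u_r r0; apply/cvgrPdist_lt => eps eps_gt0.
have eps_real : eps = (complex.Re eps)%:C.
  move: eps_gt0; rewrite ltcE => /andP [/eqP Im0 _].
  by rewrite [LHS]complexE Im0 mulr0 addr0.
have Re_eps_gt0 : 0 < complex.Re eps by rewrite -ltcR -eps_real.
near=> t; rewrite (le_lt_trans (u_r t)) // eps_real ltcR.
by rewrite (le_lt_trans (ler_norm _)) //; near: t; apply: cvgr0_norm_lt.
Unshelve. all: by end_near. Qed.

(* R[i] has no completeness instance, so the limit is built from the real and
   imaginary parts, each an absolutely convergent real series. *)
Lemma series_cvgc_geometric_bound (z : R[i]) (w : nat -> R[i]) : `|z| < 1 ->
  (forall j, `|w j| <= `|z| ^+ j) -> exists l : R[i], series w @ \oo --> l.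
Proof.
move=> z_lt1 w_le; set rho := complex.Re `|z|.
have rho_lt1 : rho < 1 by rewrite -ltcR -normc_real.
have real_series_cvg (f : nat -> R) :
    (forall j, `|f j|%:C <= `|w j|) -> cvgn (series f).
  move=> f_le; apply: normed_cvg; apply: (@series_le_cvg _ _ (geometric 1 rho)).
  - by move=> n; rewrite normr_ge0.
  - by move=> n; rewrite /geometric /= mul1r exprn_ge0 ?Re_normc_ge0.
  - move=> n; rewrite /geometric /= mul1r -lecR (le_trans (f_le n)) //.
    by rewrite rmorphXn /= -normc_real w_le.
  - by apply: is_cvg_geometric_series; rewrite ger0_norm ?Re_normc_ge0.
pose fr j := complex.Re (w j); pose fi j := complex.Im (w j).
have /cvg_ex [lr fr_cvg] : cvgn (series fr).
  by apply: real_series_cvg => j; apply: normc_ge_Re.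
have /cvg_ex [li fi_cvg] : cvgn (series fi).
  by apply: real_series_cvg => j; apply: normc_ge_Im.
exists (lr%:C + 'i%C * li%:C).
apply: (@cvgc_real_bound _ _ _ _ _
  (fun n => `|series fr n - lr| + `|series fi n - li|)).
- move=> n; have -> : series w n = (series fr n)%:C + 'i%C * (series fi n)%:C.
    rewrite !seriesEord /= !rmorph_sum mulr_sumr -big_split /=.
    by apply: eq_bigr => j _; rewrite -complexE.
  rewrite opprD addrACA -mulrBr -!rmorphB (distrC (series fr n)) (distrC (series fi n)).
  exact: normc_complex_le.
- rewrite -[0 : R]addr0; apply: cvgD; apply/norm_cvg0P/subr_cvg0.
  + exact: fr_cvg.
  + exact: fi_cvg.
Qed.

Lemma series_walk_labels_cvg e (z : R[i]) : `|z| < 1 ->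
  exists l : R[i], series (fun j => (label (walk_vtx e j.+1))%:~R * z ^+ j) @ \oo --> l.
Proof.
move=> z_lt1; apply: series_cvgc_geometric_bound z_lt1 _ => j.
rewrite normrM normrX; case: (walk_vtx e j.+1) => /=;
  by rewrite ?normrN ?normr1 ?normr0 ?mul1r ?mul0r ?exprn_ge0.
Qed.

Lemma eval_word_prefix_cvg e (z x l : R[i]) : `|z| < 1 ->
  series (fun j => (label (walk_vtx e j.+1))%:~R * z ^+ j) @ \oo --> l ->
  (fun n => eval_word z x (word_prefix e n)) @ \oo --> l.
Proof.
move=> z_lt1 series_cvg; set rho := complex.Re `|z|.
have rho_lt1 : rho < 1 by rewrite -ltcR -normc_real.
set K := complex.Re `|x| + 1.
have tail_le n :
    `|0 - (x + (last_coef (word_prefix e n))%:~R) * z ^+ n| <= (K * rho ^+ n)%:C.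
  rewrite sub0r normrN normrM normrX normc_real rmorphM rmorphXn /= -normc_real.
  rewrite ler_wpM2r ?exprn_ge0 // rmorphD /= -normc_real (le_trans (ler_normD _ _)) //.
  by rewrite lerD2l /last_coef; case: (last _ _); rewrite ?normr0 ?normrN ?normr1.
have tail_cvg := @cvgc_real_bound _ \oo _ _ _ _ tail_le.
under eq_fun do rewrite eval_word_prefix.
rewrite -[l]addr0; apply: cvgD; first exact: series_cvg.
apply: tail_cvg; rewrite -(mulr0 K); apply: cvgMl_tmp; apply: cvg_expr.
by rewrite ger0_norm ?Re_normc_ge0.
Qed.

End ComplexConvergence.

Theorem proposition4p2p1 (R : realType) :
  (* finite words *)
  (forall e : seq letter, exists a : seq int,
     [/\ size a = (size e).+1,
         all (fun t => t \in [:: -1; 0; 1]) a,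
         (forall (e' : seq letter) (s : letter), e = rcons e' s ->
             nth 0 a (size e) = (if s is Lf then 0 else -1)),
         take (size e) a = walk_labels e
       & forall z x : R[i],
           eval_word z x e = x * z ^+ (size e)
                             + \sum_(j < (size e).+1) (nth 0 a j)%:~R * z ^+ j])
  /\
  (* the label sequences that occur are exactly the alternating ones *)
  (forall a : seq int,
     (exists e : seq letter, walk_labels e = a) <-> alternating_signs a)
  /\
  (* right-infinite words *)
  (forall (e : nat -> letter) (z : R[i]), 0 < `|z| < 1 ->
     exists a : nat -> int,
       [/\ forall j, a j \in [:: -1; 0; 1],
           forall j, a j = label (walk_vtx e j.+1)
         & exists l : R[i],
             series (fun j => (a j)%:~R * z ^+ j) @ \oo --> l /\
             forall x : R[i], (fun n : nat => eval_word z x (word_prefix e n)) @ \oo --> l]).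
Proof.
split; [|split; first exact: walk_labelsP].
  move=> e; exists (word_coefs e); split.
  - by rewrite size_rcons size_walk_labels.
  - by rewrite all_rcons all_trit_walk_labels_from andbT /last_coef; case: last.
  - by move=> e' s ->; rewrite nth_word_coefs_size last_coef_rcons; case: s.
  - by rewrite /word_coefs -cats1 take_size_cat ?size_walk_labels.
  - by move=> z x; apply: eval_wordE.
move=> e z /andP [_ z_lt1]; exists (fun j => label (walk_vtx e j.+1)); split => //.
  by move=> j; apply: trit_label.
have [l series_cvg] := @series_walk_labels_cvg R e z z_lt1.
by exists l; split => // x; apply: eval_word_prefix_cvg.
Qed.
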